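(* Let $V$ be a finite-dimensional real vector space and $A\subset V$ a finite set of nonzero vectors spanning $V$, no two of which are parallel. The following are equivalent: (i) $A$ is indecomposable; (ii) for every basis $B\subset A$ of $V$, the graph $G(B;A)$ is connected; (iii) for some basis $B\subset A$ of $V$, the graph $G(B;A)$ is connected.
   Context: A decomposition of $A$ is a partition $A=A_1\cup A_2$ into nonempty sets with $V_1\cap V_2=0$, where $V_j=\mathrm{span}(A_j)$; $A$ is indecomposable if it has no decomposition. For a basis $B\subset A$, let $[\cdot,\cdot]_B$ be the inner product for which $B$ is orthonormal, and let $G(B;A)$ be the finite graph with vertex set $B$ and an edge between distinct $x,y\in B$ whenever there is $z\in A\setminus B$ with $[x,z]_B\ne0$ and $[y,z]_B\ne0$. *)

From HB Require Import structures.
From mathcomp Require Import all_boot all_order all_algebra.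
From mathcomp Require Import reals.
Set Implicit Arguments. Unset Strict Implicit. Unset Printing Implicit Defensive.
Import Order.TTheory GRing.Theory Num.Theory.
Local Open Scope ring_scope.

Section Defs.
Variables (R : realType) (V : vectType R).

Definition decomposition (A A1 A2 : seq V) : Prop :=
  [/\ perm_eq A (A1 ++ A2), A1 != [::], A2 != [::] &
      (<<A1>> :&: <<A2>>)%VS = 0%VS].

Definition indecomposable (A : seq V) : Prop :=
  ~ exists A1 A2 : seq V, decomposition A A1 A2.

(* The inner product [.,.]_B for which the basis B is orthonormal:
   sum of products of coordinates in B. *)
Definition innerB (B : seq V) (u v : V) : R :=
  \sum_(i < size B) coord (in_tuple B) i u * coord (in_tuple B) i v.

Definition GB_edge (A B : seq V) : rel V :=
  fun x y => [&& x != y &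
    has (fun z => [&& z \notin B, innerB B x z != 0 & innerB B y z != 0]) A].

Definition GB_connected (A B : seq V) : Prop :=
  forall x y, x \in B -> y \in B ->
    exists p : seq V, [&& all (mem B) p, path (GB_edge A B) x p & last x p == y].

Definition basis_in (A B : seq V) : Prop :=
  {subset B <= A} /\ basis_of fullv B.

End Defs.

From HB Require Import structures.
From mathcomp Require Import all_boot all_order all_algebra.
From mathcomp Require Import boolp reals.
Set Implicit Arguments. Unset Strict Implicit. Unset Printing Implicit Defensive.
Import Order.TTheory GRing.Theory Num.Theory.
Local Open Scope ring_scope.

(* For a basis B of V inside A, [b, a]_B is the b-coordinate of a, so b and c
   are adjacent in G(B;A) when some a in A \ B has nonzero coordinates at both.
   If A = A1 u A2 is a decomposition, every a in A_k is supported on B n A_k,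
   so no edge joins the nonempty sets B n A1 and B n A2.  Conversely, if the
   component C of some vertex is not all of B, the vectors with a nonzero
   coordinate on C are supported on C (a coordinate off C would give an edge
   leaving C) while all others vanish on C; their spans meet only in 0.
   As A spans V, some basis B lies inside A, which links (ii) and (iii). *)

Lemma exists_free_subset_span (K : fieldType) (V : vectType K) (X : seq V) :
  exists Y, [/\ {subset Y <= X}, free Y & <<Y>>%VS = <<X>>%VS].
Proof.
elim: X => [|x X [Y [sYX freeY spanY]]]; first by exists [::]; rewrite nil_free.
have sYxX : {subset Y <= x :: X} by move=> v /sYX; rewrite inE orbC => ->.
have [xX | xNX] := boolP (x \in <<X>>%VS).
  by exists Y; rewrite span_cons spanY (addv_idPr xX).
exists (x :: Y); split; rewrite ?free_cons ?span_cons ?spanY ?xNX //.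
by move=> v; rewrite !inE => /orP[-> // | /sYxX].
Qed.

Lemma basis_in_exists (R : realType) (V : vectType R) (A : seq V) :
  <<A>>%VS = fullv -> exists B, basis_in A B.
Proof.
move=> spanA; have [B [sBA freeB spanB]] := exists_free_subset_span A.
by exists B; split; rewrite // /basis_of spanB spanA eqxx.
Qed.

Section BasisCoordinates.
Variables (K : fieldType) (V : vectType K) (B : seq V).
Hypothesis basisB : basis_of fullv B.
Local Notation crd := (coord (in_tuple B)).

Lemma coord_basis_nth (i j : 'I_(size B)) : crd i B`_j = (j == i)%:R.
Proof. by rewrite coord_free ?(basis_free basisB). Qed.

Lemma coord_basis_nth_neq0 (i j : 'I_(size B)) : (crd i B`_j != 0) = (j == i).
Proof. by rewrite coord_basis_nth; case: (j == i); rewrite ?mulr1n ?oner_eq0 ?eqxx. Qed.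

Lemma coord_basis_expansion v : v = \sum_(i < size B) crd i v *: B`_i.
Proof. exact: (coord_basis (X := in_tuple B) basisB (memvf v)). Qed.

Lemma coord_basis_eq0 v : (v == 0) = [forall i, crd i v == 0].
Proof.
apply/eqP/forallP => [-> i | crd0]; first by rewrite linear0.
rewrite (coord_basis_expansion v) big1 // => i _.
by rewrite (eqP (crd0 i)) scale0r.
Qed.

Lemma coord_span_eq0 S i v :
  {in S, forall s, crd i s = 0} -> v \in <<S>>%VS -> crd i v = 0.
Proof.
move=> crdS0 /(coord_span (X := in_tuple S)) ->; rewrite linear_sum big1 // => j _.
by rewrite linearZ /= crdS0 ?mulr0 ?mem_nth.
Qed.

Lemma coord_separated_cap_eq0 (C : pred 'I_(size B)) S1 S2 :
  {in S1, forall s i, ~~ C i -> crd i s = 0} ->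
  {in S2, forall s i, C i -> crd i s = 0} ->
  (<<S1>> :&: <<S2>>)%VS = 0%VS.
Proof.
move=> crdS1 crdS2; apply/eqP; rewrite -subv0; apply/subvP => v.
case/memv_capP => vS1 vS2; rewrite memv0 coord_basis_eq0; apply/forallP => i.
apply/eqP; have [Ci | NCi] := boolP (C i).
  by apply: coord_span_eq0 vS2 => s /crdS2; apply.
by apply: coord_span_eq0 vS1 => s /crdS1; apply.
Qed.

(* Split z along the parts of B in A1 and outside A1: the second summand
   lies in <<A2>> and, as z minus the first one, also in <<A1>>. *)
Lemma coord_decomposition_eq0 A1 A2 z (k : 'I_(size B)) :
  (<<A1>> :&: <<A2>>)%VS = 0%VS -> {subset B <= A1 ++ A2} ->
  z \in A1 -> B`_k \notin A1 -> crd k z = 0.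
Proof.
move=> capA sBA zA1 kNA1.
pose u1 := \sum_(j < size B | B`_j \in A1) crd j z *: B`_j.
pose u2 := \sum_(j < size B | B`_j \notin A1) crd j z *: B`_j.
have u1A1 : u1 \in <<A1>>%VS by apply/memv_suml => j jA1; rewrite memvZ ?memv_span.
have u2A2 : u2 \in <<A2>>%VS.
  apply/memv_suml => j jNA1; apply/memvZ/memv_span.
  by move: (sBA _ (mem_nth 0 (ltn_ord j))); rewrite mem_cat (negbTE jNA1).
have u2A1 : u2 \in <<A1>>%VS.
  have z_u : z = u1 + u2.
    rewrite {1}(coord_basis_expansion z).
    by rewrite (bigID (fun j : 'I_(size B) => B`_j \in A1)).
  have -> : u2 = z - u1 by rewrite z_u addrC addKr.
  exact: memvB (memv_span zA1) u1A1.
have : u2 \in 0%VS by rewrite -capA memv_cap u2A1 u2A2.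
rewrite memv0 => /eqP/(congr1 (crd k)); rewrite linear0 => <-.
rewrite linear_sum (bigD1 k) //= big1 => [|j /andP[_ /negbTE jk]].
  by rewrite linearZ /= coord_basis_nth eqxx mulr1 addr0.
by rewrite linearZ /= coord_basis_nth jk mulr0.
Qed.

End BasisCoordinates.

Lemma path_last_closed (T : eqType) (e : rel T) (D : seq T) (P : pred T) :
  {in D &, forall x y, e x y -> P x -> P y} ->
  forall x p, x \in D -> all (mem D) p -> path e x p -> P x -> P (last x p).
Proof.
move=> closedP x p; elim: p x => [//|y p IHp] x xD /= /andP[yD pD] /andP[exy pe] Px.
exact: IHp yD pD pe (closedP x y xD yD exy Px).
Qed.

Section Decompositions.
Variables (R : realType) (V : vectType R) (A A1 A2 : seq V).
Hypothesis decA : decomposition A A1 A2.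

Lemma decompositionC : decomposition A A2 A1.
Proof.
case: decA => pA ne1 ne2 capA; split; rewrite 1?capvC //.
by apply: perm_trans pA _; rewrite perm_catC.
Qed.

Lemma decomposition_disjoint v : uniq A -> v \in A1 -> v \notin A2.
Proof.
case: decA => pA _ _ _; rewrite (perm_uniq pA) cat_uniq => /and3P[_ disjA _] vA1.
by apply: contra disjA => vA2; apply/hasP; exists v.
Qed.

End Decompositions.

Section GBGraph.
Variables (R : realType) (V : vectType R) (A B : seq V).
Hypothesis basisB : basis_of fullv B.
Local Notation crd := (coord (in_tuple B)).

Lemma mem_basisP b : b \in B -> exists i : 'I_(size B), b = B`_i.
Proof. by case/(nthP 0) => i iB <-; exists (Ordinal iB). Qed.

Lemma innerB_nth (j : 'I_(size B)) z : innerB B B`_j z = crd j z.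
Proof.
rewrite /innerB (bigD1 j) //= coord_basis_nth // eqxx mul1r.
rewrite big1 ?addr0 // => i /negbTE ij.
by rewrite coord_basis_nth // eq_sym ij mul0r.
Qed.

Lemma GB_edge_nth (i j : 'I_(size B)) : GB_edge A B B`_i B`_j =
  (B`_i != B`_j) && has (fun z => (crd i z != 0) && (crd j z != 0)) A.
Proof.
rewrite /GB_edge; have [//|Nij /=] := eqVneq.
apply/hasP/hasP => [[z zA /and3P[_ iz jz]] | [z zA /andP[iz jz]]]; exists z => //.
  by move: iz jz; rewrite !innerB_nth => -> ->.
rewrite !innerB_nth iz jz !andbT; apply: contraNN Nij => /mem_basisP[k zk].
move: iz jz; rewrite zk !coord_basis_nth_neq0 // => /eqP <- /eqP <- //.
Qed.

Definition GB_path x y :=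
  exists p, [&& all (mem B) p, path (GB_edge A B) x p & last x p == y].

Lemma GB_path_rcons x y z :
  GB_path x y -> z \in B -> GB_edge A B y z -> GB_path x z.
Proof.
case=> p /and3P[pB xp /eqP py] zB yz; exists (rcons p z).
by rewrite all_rcons rcons_path last_rcons py pB xp yz eqxx !andbT.
Qed.

Lemma indecomposable_GB_connected :
  {subset B <= A} -> indecomposable A -> GB_connected A B.
Proof.
move=> sBA indA x y xB yB; change (GB_path x y).
have [//|Nxy] := asboolP (GB_path x y); case: indA.
pose C (i : 'I_(size B)) := `[< GB_path x B`_i >].
pose P (a : V) := [exists i, C i && (crd i a != 0)].
have [i0 x_i0] := mem_basisP xB; have [j0 y_j0] := mem_basisP yB.
exists (filter P A), (filter (predC P) A); split.
- by rewrite perm_sym perm_filterC.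
- rewrite -has_filter; apply/hasP; exists x; first exact: sBA.
  apply/existsP; exists i0; apply/andP; split.
    by apply/asboolP; exists [::]; rewrite /= x_i0 eqxx.
  by rewrite x_i0 coord_basis_nth_neq0.
- rewrite -has_filter; apply/hasP; exists y; first exact: sBA.
  apply/existsPn => i; apply/negP => /andP[/asboolP xi].
  by rewrite y_j0 coord_basis_nth_neq0 // => /eqP ji; apply: Nxy; rewrite y_j0 ji.
- apply: (coord_separated_cap_eq0 basisB (C := C)) => s; rewrite mem_filter.
    case/andP=> /existsP[j /andP[Cj js]] sA i NCi; apply/eqP; apply: contraNT NCi => si.
    apply/asboolP; have [<- | Nji] := eqVneq B`_j B`_i; first exact/asboolP.
    apply: GB_path_rcons (asboolW Cj) (mem_nth 0 (ltn_ord i)) _.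
    by rewrite GB_edge_nth Nji; apply/hasP; exists s; rewrite ?js ?si.
  by case/andP=> /existsPn Ps _ i Ci; move: (Ps i); rewrite Ci negbK => /eqP.
Qed.

Section Decomposition.
Variables (A1 A2 : seq V).
Hypotheses (sBA : {subset B <= A}) (decA : decomposition A A1 A2).

Lemma decomposition_support z k : z \in A1 -> crd k z != 0 -> B`_k \in A1.
Proof.
case: decA => pA _ _ capA zA1; apply: contraTT => kNA1; apply/negPn/eqP.
apply: (coord_decomposition_eq0 basisB capA _ zA1 kNA1).
by move=> b /sBA; rewrite (perm_mem pA).
Qed.

Lemma decomposition_meets_basis : 0 \notin A -> exists2 b, b \in B & b \in A1.
Proof.
move=> A_neq0; case: (decA) => pA ne1 _ _.
have [a aA1] : exists a, a \in A1.
  by case: (A1) ne1 => // a A1' _; exists a; rewrite inE eqxx.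
have aA : a \in A by rewrite (perm_mem pA) mem_cat aA1.
have /forallPn[i ai] : ~~ [forall i, crd i a == 0].
  by rewrite -coord_basis_eq0 //; apply: contraNneq A_neq0 => <-.
by exists B`_i; [exact: mem_nth | exact: decomposition_support aA1 ai].
Qed.

End Decomposition.

Lemma decomposition_GB_edge_closed A1 A2 :
  uniq A -> {subset B <= A} -> decomposition A A1 A2 ->
  {in B &, forall b c, GB_edge A B b c -> b \in A1 -> c \in A1}.
Proof.
move=> uA sBA decA b c /mem_basisP[i ->] /mem_basisP[j ->].
rewrite GB_edge_nth => /andP[_ /hasP[z zA /andP[iz jz]]] iA1.
have : z \in A1 ++ A2 by case: decA => pA _ _ _; rewrite -(perm_mem pA).
rewrite mem_cat => /orP[zA1 | zA2].
  exact: (decomposition_support sBA decA zA1 jz).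
have iA2 := decomposition_support sBA (decompositionC decA) zA2 iz.
by rewrite (negbTE (decomposition_disjoint decA uA iA1)) in iA2.
Qed.

Lemma GB_connected_indecomposable :
  uniq A -> 0 \notin A -> {subset B <= A} -> GB_connected A B -> indecomposable A.
Proof.
move=> uA A_neq0 sBA connB [A1 [A2 decA]].
have [b bB bA1] := decomposition_meets_basis sBA decA A_neq0.
have [c cB cA2] := decomposition_meets_basis sBA (decompositionC decA) A_neq0.
have [p /and3P[pB bp /eqP pc]] := connB b c bB cB.
have := path_last_closed (decomposition_GB_edge_closed uA sBA decA) bB pB bp bA1.
by rewrite pc => /(decomposition_disjoint decA uA); rewrite cA2.
Qed.

End GBGraph.

Theorem mainTheorem10 (R : realType) (V : vectType R) (A : seq V) :
  uniq A ->
  0 \notin A ->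
  <<A>>%VS = fullv ->
  (forall x y, x \in A -> y \in A -> x != y -> x \notin <[y]>%VS) ->
  (indecomposable A <-> forall B, basis_in A B -> GB_connected A B) /\
  ((forall B, basis_in A B -> GB_connected A B) <->
     exists B, basis_in A B /\ GB_connected A B).
Proof.
(* The vectors of A need not be pairwise non-parallel. *)
move=> uA A_neq0 spanA _.
have [B0 B0A] := basis_in_exists spanA.
have i_ii B : basis_in A B -> indecomposable A -> GB_connected A B.
  by case=> sBA basisB; apply: indecomposable_GB_connected.
have iii_i B : basis_in A B -> GB_connected A B -> indecomposable A.
  by case=> sBA basisB; apply: GB_connected_indecomposable.
split; split.
- by move=> indA B BA; apply: i_ii.
- by move=> connAll; apply: (iii_i B0 B0A (connAll B0 B0A)).
- by move=> connAll; exists B0; split; last apply: connAll.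
- by case=> B [BA connB] B' B'A; apply/(i_ii B' B'A)/(iii_i B BA connB).
Qed.
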